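(* Let $(u_n)_{n \geq 0}$ be a sequence of integers, not identically zero, satisfying $u_n = a_1 u_{n-1} + \cdots + a_k u_{n-k}$ for all $n \geq k$, with $a_1, \ldots, a_k \in \mathbf{Z}$ and $a_k \neq 0$. Let $\mathbf{K}$ be the splitting field over $\mathbf{Q}$ of $f_u(X) = X^k - a_1 X^{k-1} - \cdots - a_k$, let $\alpha_1, \ldots, \alpha_r \in \mathbf{K}$ be the distinct roots of $f_u$, and let $g_1, \ldots, g_r \in \mathbf{K}[X]$ be the polynomials such that $u_n = \sum_{i=1}^r g_i(n)\alpha_i^n$ for all integers $n \geq 0$. Then $(u_n/n)_{n \geq 1}$ is a linear recurrence if and only if $g_1(0) = \cdots = g_r(0) = 0$. Moreover, in such a case the set $\mathcal{A}_u = \{n \in \mathbf{N} : \gcd(n, u_n) = 1\}$ is finite.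
   Context: $\mathbf{N}$ denotes the set of positive integers. A sequence is a linear recurrence if it satisfies a linear recurrence relation of finite order with constant (complex) coefficients. The polynomials $g_i$ in the representation $u_n = \sum_{i=1}^r g_i(n)\alpha_i^n$ exist and are uniquely determined by $(u_n)$. *)

From HB Require Import structures.
From mathcomp Require Import all_boot all_order all_algebra all_field.
Set Implicit Arguments. Unset Strict Implicit. Unset Printing Implicit Defensive.
Import Order.TTheory GRing.Theory Num.Theory.
Local Open Scope ring_scope.

Definition is_linrec (C : ringType) (v : nat -> C) : Prop :=
  exists (d : nat) (c : 'I_d -> C),
    forall n : nat, v (n + d)%N = \sum_(i < d) c i * v (n + i)%N.

Definition charpoly_rec (C : ringType) (k : nat) (a : nat -> int) : {poly C} :=
  'X^k - \sum_(1 <= i < k.+1) ((a i)%:~R : C) *: 'X^(k - i).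

Definition A_set (u : nat -> int) : nat -> Prop :=
  fun n => (0 < n)%N /\ gcdn n `|u n|%N = 1%N.

From HB Require Import structures.
From mathcomp Require Import all_boot all_order all_algebra all_field.
From mathcomp Require Import ring zify.
Import Order.TTheory GRing.Theory Num.Theory.
Local Open Scope ring_scope.
Set Implicit Arguments. Unset Strict Implicit.

(* Let a polynomial P act on sequences through the shift E, (P(E) s)_n = sum_j p_j s_(n+j).
   Each (X - alpha)^N kills n |-> p(n) alpha^n once deg p < N, so if all g_i(0) = 0 then
   u_(n+1)/(n+1) = sum_i h_i(n+1) alpha_i^(n+1) with g_i = X h_i is killed by a power
   f_u^N, hence is a linear recurrence.  Conversely, multiplying a monic recurrence
   P(E) v = 0 of order d for v_n = u_(n+1)/(n+1) by prod_(l <= d) (n + l + 1) yields an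
   identity sum_i G_i(n) alpha_i^n = 0, so every G_i vanishes by uniqueness of such
   representations; evaluating G_i at -(d+1) leaves only the term g_i(0).  Finally,
   d! v_n obeys the monic integer recurrence f_u^N and is an integer for n < d, hence
   for all n: n+1 divides d! u_(n+1), and gcd(n+1, u_(n+1)) = 1 forces n+1 <= d!. *)

Section ShiftOperator.

Variable R : nzRingType.
Implicit Types (P Q : {poly R}) (s : nat -> R).

Definition shiftp P s n : R := \sum_(j < size P) P`_j * s (n + j)%N.

Lemma shiftp_widen {N P s n} :
  (size P <= N)%N -> shiftp P s n = \sum_(j < N) P`_j * s (n + j)%N.
Proof.
move=> hN; rewrite /shiftp -(subnKC hN) big_split_ord /=.
rewrite [X in _ = _ + X]big1 ?addr0 // => i _.
by rewrite nth_default ?mul0r // leq_addr.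
Qed.

Lemma eq_shiftp P s1 s2 : s1 =1 s2 -> shiftp P s1 =1 shiftp P s2.
Proof. by move=> eq_s n; apply: eq_bigr => i _; rewrite eq_s. Qed.

Lemma shiftp0s P : shiftp P (fun=> 0) =1 (fun=> 0).
Proof. by move=> n; apply: big1 => i _; rewrite mulr0. Qed.

Lemma shiftpD P Q s n : shiftp (P + Q) s n = shiftp P s n + shiftp Q s n.
Proof.
set N := maxn (size P) (size Q).
rewrite (shiftp_widen (leq_trans (size_polyD P Q) (leqnn N))).
rewrite (shiftp_widen (leq_maxl (size P) (size Q)))
  (shiftp_widen (leq_maxr (size P) (size Q))) -big_split.
by apply: eq_bigr => i _; rewrite coefD mulrDl.
Qed.

Lemma shiftpZ c P s n : shiftp (c *: P) s n = c * shiftp P s n.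
Proof.
rewrite (shiftp_widen (size_scale_leq c P)) mulr_sumr.
by apply: eq_bigr => i _; rewrite coefZ mulrA.
Qed.

Lemma shiftpC c s n : shiftp c%:P s n = c * s n.
Proof. by rewrite (shiftp_widen (size_polyC_leq1 c)) big_ord1 coefC addn0. Qed.

Lemma shiftpMX P s n : shiftp (P * 'X) s n = shiftp P s n.+1.
Proof.
have size_PX : (size (P * 'X)%R <= (size P).+1)%N.
  by have [->|nzP] := eqVneq P 0; rewrite ?mul0r ?size_poly0 // size_mulX.
rewrite (shiftp_widen size_PX) big_ord_recl coefMX eqxx mul0r add0r.
by apply: eq_bigr => i _; rewrite coefMX /= addnS.
Qed.

Lemma shiftpM P Q s n : shiftp (P * Q) s n = shiftp P (shiftp Q s) n.
Proof.
elim/poly_ind: P n => [|P c IH] n; first by rewrite mul0r /shiftp size_poly0 !big_ord0.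
rewrite mulrDl -mulrA -(commr_polyX Q) mulrA !shiftpD !shiftpMX IH.
by rewrite mul_polyC shiftpZ shiftpC.
Qed.

Lemma shiftp_sum (I : finType) P (s : I -> nat -> R) n :
  shiftp P (fun m => \sum_i s i m) n = \sum_i shiftp P (s i) n.
Proof. by rewrite /shiftp exchange_big; apply: eq_bigr => j _; rewrite mulr_sumr. Qed.

Lemma shiftpXsubC c s n : shiftp ('X - c%:P) s n = s n.+1 - c * s n.
Proof.
by rewrite -[X in X - _]mul1r shiftpD -polyCN shiftpMX -polyC1 !shiftpC mul1r mulNr.
Qed.

Lemma shiftp_monic P s n : P \is monic ->
  shiftp P s n = \sum_(j < (size P).-1) P`_j * s (n + j)%N + s (n + (size P).-1)%N.
Proof.
move=> monP; have /prednK sizeP : (0 < size P)%N by rewrite size_poly_gt0 monic_neq0.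
by rewrite /shiftp -[in LHS]sizeP big_ord_recr /= -lead_coefE (monicP monP) mul1r.
Qed.

Lemma size_Xnsub d P : (size P <= d)%N -> size ('X^d - P) = d.+1.
Proof. by move=> sizeP; rewrite size_polyDl size_polyXn // size_polyN ltnS. Qed.

Lemma monicXnsub d P : (size P <= d)%N -> 'X^d - P \is monic.
Proof.
by move=> sizeP; rewrite monicE lead_coefDl ?lead_coefXn // size_polyN size_polyXn ltnS.
Qed.

Lemma eq_linrec s1 s2 : s1 =1 s2 -> is_linrec s1 <-> is_linrec s2.
Proof.
move=> eq_s; split=> [] [d [c rec_s]]; exists d, c => n.
  by rewrite -!eq_s rec_s; apply: eq_bigr => i _; rewrite eq_s.
by rewrite !eq_s rec_s; apply: eq_bigr => i _; rewrite eq_s.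
Qed.

Lemma linrecP s : is_linrec s <-> exists2 P, P \is monic & forall n, shiftp P s n = 0.
Proof.
split=> [[d [c rec_s]] | [P monP ann_s]]; last first.
  exists (size P).-1, (fun i => - P`_i) => n.
  move/eqP: (ann_s n); rewrite shiftp_monic // addrC addr_eq0 => /eqP ->.
  by rewrite -sumrN; apply: eq_bigr => i _; rewrite mulNr.
have size_c : (size (\sum_(i < d) c i *: 'X^i)%R <= d)%N.
  rewrite (leq_trans (size_sum _ _ _)) //; apply/bigmax_leqP => i _.
  by rewrite (leq_trans (size_scale_leq _ _)) // size_polyXn.
exists ('X^d - \sum_(i < d) c i *: 'X^i) => [|n]; first exact: monicXnsub.
rewrite shiftp_monic ?monicXnsub // size_Xnsub // rec_s -big_split.
apply: big1 => i _ /=; rewrite coefB coefXn coef_sumMXn (ltn_eqF (ltn_ord i)) sub0r.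
by rewrite (big_pred1 i) => [|j]; rewrite ?mulNr ?addNr //= val_eqE.
Qed.

End ShiftOperator.

Lemma shiftp_scale (R : comNzRingType) (P : {poly R}) c s n :
  shiftp P (fun m => c * s m) n = c * shiftp P s n.
Proof. by rewrite /shiftp mulr_sumr; apply: eq_bigr => j _; rewrite mulrCA. Qed.


Section ExpPoly.

Variable R : idomainType.
Implicit Types (p : {poly R}) (a b c : R).

Lemma size_compXaddC c p : size (p \Po ('X + c%:P)) = size p.
Proof. by rewrite size_comp_poly2 // size_XaddC. Qed.

Lemma lead_coef_compXaddC c p : lead_coef (p \Po ('X + c%:P)) = lead_coef p.
Proof. by rewrite lead_coef_comp ?size_XaddC // lead_coefXaddC expr1n mulr1. Qed.

Lemma size_compXaddC_sub a b c p :
  (size (a *: (p \Po ('X + c%:P)) - b *: p)%R <= size p)%N.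
Proof.
rewrite (leq_trans (size_polyD _ _)) // size_polyN geq_max.
by rewrite !(leq_trans (size_scale_leq _ _)) ?size_compXaddC.
Qed.

Lemma coef_compXaddC_sub a b c p :
  (a *: (p \Po ('X + c%:P)) - b *: p)`_(size p).-1 = (a - b) * lead_coef p.
Proof.
rewrite coefB !coefZ -(size_compXaddC c) -!lead_coefE lead_coef_compXaddC.
by rewrite size_compXaddC mulrBl.
Qed.

Lemma size_compXaddC_subr_lt a c p :
  p != 0 -> (size (a *: (p \Po ('X + c%:P)) - a *: p)%R < size p)%N.
Proof.
move=> nz_p; rewrite ltn_neqAle size_compXaddC_sub andbT; apply/eqP => size_eq.
have : lead_coef (a *: (p \Po ('X + c%:P)) - a *: p) = 0.
  by rewrite lead_coefE size_eq coef_compXaddC_sub subrr mul0r.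
move/eqP; rewrite lead_coef_eq0 => /eqP q0.
by move: size_eq; rewrite q0 size_poly0 => /esym/eqP; rewrite size_poly_eq0 (negPf nz_p).
Qed.

Lemma exp_termS p a n :
  p.[n.+1%:R] * a ^+ n.+1 = (a *: (p \Po ('X + 1))).[n%:R] * a ^+ n.
Proof. by rewrite hornerZ horner_comp !hornerE -natr1 exprS; ring. Qed.

Lemma shiftp_XsubCXn_exp a N p : (size p <= N)%N ->
  shiftp (('X - a%:P) ^+ N) (fun m => p.[m%:R] * a ^+ m) =1 (fun=> 0).
Proof.
elim: N p => [|N IH] p size_p n.
  move: size_p; rewrite leqn0 size_poly_eq0 => /eqP ->.
  by rewrite expr0 -polyC1 shiftpC horner0 mul0r mulr0.
set q := a *: (p \Po ('X + 1%:P)) - a *: p.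
have size_q : (size q <= N)%N.
  have [p0|nz_p] := eqVneq p 0; first by rewrite /q p0 comp_poly0 !scaler0 subr0 size_poly0.
  by rewrite -ltnS (leq_trans (size_compXaddC_subr_lt a 1 nz_p)).
rewrite exprSr shiftpM -(IH q size_q n); apply: eq_shiftp => m.
by rewrite shiftpXsubC exp_termS hornerD hornerN !hornerZ mulrBl mulrA.
Qed.

Definition exppoly (I : finType) (g : I -> {poly R}) (al : I -> R) (n : nat) : R :=
  \sum_i (g i).[n%:R] * al i ^+ n.

Lemma exppolyS (I : finType) (g : I -> {poly R}) al n :
  exppoly g al n.+1 = exppoly (fun i => al i *: (g i \Po ('X + 1))) al n.
Proof. by apply: eq_bigr => i _; rewrite exp_termS. Qed.

Lemma shiftp_exppoly_eq0 (I : finType) N f (g : I -> {poly R}) al :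
  (forall i, root f (al i)) -> (forall i, size (g i) <= N)%N ->
  forall n, shiftp (f ^+ N) (exppoly g al) n = 0.
Proof.
move=> f_al size_g n; rewrite shiftp_sum big1 // => i _.
have [q ->] := factor_theorem _ _ (f_al i).
rewrite exprMn shiftpM (eq_shiftp _ (shiftp_XsubCXn_exp (al i) (size_g i))).
exact: shiftp0s.
Qed.

End ExpPoly.

Section ExpPolyUniq.

Variable R : numDomainType.

Lemma poly_natr_eq0 (p : {poly R}) : (forall n : nat, p.[n%:R] = 0) -> p = 0.
Proof.
move=> p_nat; apply/eqP; apply: contraT => nz_p.
have := max_poly_roots (rs := [seq i%:R | i <- iota 0 (size p)]) nz_p.
rewrite size_map size_iota ltnn; apply.
  by apply/allP => _ /mapP [i _ ->]; apply/rootP.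
by rewrite map_inj_uniq ?iota_uniq // => i j /eqP; rewrite eqr_nat => /eqP.
Qed.

Lemma exppoly_eq0 (I : finType) (g : I -> {poly R}) (al : I -> R) :
  injective al -> (forall i, al i != 0) ->
  (forall n, exppoly g al n = 0) -> forall i, g i = 0.
Proof.
move=> al_inj nz_al; move: {2}(\sum_i size (g i))%N (leqnn (\sum_i size (g i))) => m.
elim: m g => [|m IH] g size_g g0.
  move=> i; apply/eqP; rewrite -size_poly_eq0 -leqn0 (leq_trans _ size_g) //.
  by rewrite (bigD1 i) //= leq_addr.
have [i0 nz_gi0|all0] := pickP (fun i => g i != 0); last first.
  by move=> i; apply/eqP/negbFE/all0.
(* Applying E - al i0 lowers the degree of g i0 and does not raise the others. *)
pose Q i := al i *: (g i \Po ('X + 1%:P)) - al i0 *: g i.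
have Q0 : forall i, Q i = 0.
  apply: IH => [|n].
    rewrite -ltnS (leq_trans _ size_g) // (bigD1 i0) //= [X in (_ < X)%N](bigD1 i0) //=.
    rewrite -addSn leq_add ?size_compXaddC_subr_lt //.
    by apply: leq_sum => i _; apply: size_compXaddC_sub.
  have -> : exppoly Q al n = exppoly g al n.+1 - al i0 * exppoly g al n.
    rewrite exppolyS /exppoly mulr_sumr -sumrB; apply: eq_bigr => i _.
    by rewrite hornerD hornerN !hornerZ mulrBl mulrA.
  by rewrite !g0 mulr0 subr0.
have g_off i : i != i0 -> g i = 0.
  move=> ne_i; apply/eqP; apply: contraT => nz_gi.
  move: (coef_compXaddC_sub (al i) (al i0) 1 (g i)); rewrite -/(Q i) Q0 coef0.
  move/esym/eqP; rewrite mulf_eq0 lead_coef_eq0 (negPf nz_gi) orbF subr_eq0.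
  by move/eqP/al_inj/eqP; rewrite (negPf ne_i).
suff gi0 : g i0 = 0 by rewrite gi0 eqxx in nz_gi0.
apply: poly_natr_eq0 => n; move: (g0 n).
rewrite /exppoly (bigD1 i0) //= big1 => [|i /g_off ->]; last by rewrite horner0 mul0r.
by rewrite addr0 => /eqP; rewrite mulf_eq0 expf_eq0 (negPf (nz_al i0)) andbF orbF => /eqP.
Qed.

End ExpPolyUniq.

Lemma prod_natr_shift_eq0 (R : numDomainType) d (j : 'I_d.+1) :
  (\prod_(l < d.+1 | l != j) (- d.+1%:R + l.+1%:R : R) == 0) = (j != ord_max).
Proof.
apply/prodf_eq0/idP => [[l ne_lj] | ne_j].
  rewrite addrC subr_eq0 eqr_nat eqSS => /eqP l_max.
  by apply: contra ne_lj => /eqP ->; apply/eqP/val_inj.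
by exists ord_max; rewrite 1?eq_sym // addrC subrr.
Qed.


Section DivSucc.

Variable R : numFieldType.

Lemma shiftp_div_succ N (P : {poly R}) s n : (size P <= N)%N ->
  \prod_(l < N) (n + l).+1%:R * shiftp P (fun m => s m.+1 / m.+1%:R) n
  = \sum_(j < N) P`_j * s (n + j).+1 * \prod_(l < N | l != j) (n + l).+1%:R.
Proof.
move=> size_P; rewrite (shiftp_widen size_P) mulr_sumr; apply: eq_bigr => j _.
have nz_nj : (n + j).+1%:R != 0 :> R by rewrite pnatr_eq0.
by rewrite (bigD1 j) //= mulrC -!mulrA mulKf.
Qed.

Lemma shiftp_exppoly_div_succ_eq0 (I : finType) f (g : I -> {poly R}) al :
  (forall i, root f (al i)) -> (forall i, (g i).[0] = 0) ->
  exists N, forall n, shiftp (f ^+ N) (fun m => exppoly g al m.+1 / m.+1%:R) n = 0.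
Proof.
move=> f_al g0; pose h i := g i %/ 'X.
have gh i : g i = h i * 'X by rewrite divpK // -['X]subr0 -polyC0 dvdp_XsubCl /root g0.
pose h' i := al i *: (h i \Po ('X + 1)).
exists (\max_i size (h' i)) => n.
rewrite -(shiftp_exppoly_eq0 (g := h') f_al (fun i => leq_bigmax i) n).
apply: eq_shiftp => m; rewrite -exppolyS /exppoly mulr_suml; apply: eq_bigr => i _.
have nz_m : m.+1%:R != 0 :> R by rewrite pnatr_eq0.
by rewrite gh hornerMX mulrAC mulfK.
Qed.

Lemma exppoly_div_succ_linrec_coef0 (I : finType) (g : I -> {poly R}) al :
  injective al -> (forall i, al i != 0) ->
  is_linrec (fun n => exppoly g al n.+1 / n.+1%:R) -> forall i, (g i).[0] = 0.
Proof.
move=> al_inj nz_al /linrecP [P monP annP] i0; set d := (size P).-1.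
have size_P : size P = d.+1 by rewrite prednK // size_poly_gt0 monic_neq0.
pose L (j : 'I_d.+1) : {poly R} := \prod_(l < d.+1 | l != j) ('X + l.+1%:R%:P).
have L_nat j (x : R) : (L j).[x] = \prod_(l < d.+1 | l != j) (x + l.+1%:R).
  by rewrite horner_prod; apply: eq_bigr => l _; rewrite hornerD hornerX hornerC.
pose G i := \sum_(j < d.+1) (P`_j * al i ^+ j.+1) *: ((g i \Po ('X + j.+1%:R%:P)) * L j).
have G0 : forall i, G i = 0.
  apply: (exppoly_eq0 al_inj nz_al) => n.
  rewrite -[RHS](mulr0 (\prod_(l < d.+1) (n + l).+1%:R)) -(annP n).
  rewrite shiftp_div_succ ?size_P // /exppoly.
  under eq_bigr do rewrite horner_sum mulr_suml.
  rewrite exchange_big; apply: eq_bigr => j _ /=; rewrite mulr_sumr mulr_suml.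
  apply: eq_bigr => i _; rewrite hornerZ hornerM horner_comp L_nat.
  rewrite hornerD hornerX hornerC -addnS natrD exprD.
  under [in RHS]eq_bigr do rewrite -addnS natrD.
  by ring.
move: (congr1 (horner^~ (- d.+1%:R)) (G0 i0)); rewrite /= horner0 /G horner_sum.
rewrite big_ord_recr big1 /= => [|j _]; last first.
  rewrite hornerZ hornerM L_nat; apply/eqP; rewrite !mulf_eq0 prod_natr_shift_eq0.
  by rewrite -val_eqE /= neq_ltn ltn_ord !orbT.
rewrite add0r hornerZ hornerM horner_comp !hornerE addNr -/(L ord_max) L_nat.
have -> : P`_d = 1 by rewrite -(monicP monP) lead_coefE size_P.
move/eqP; rewrite mul1r !mulf_eq0 expf_eq0 (negPf (nz_al i0)) andbF /=.
by rewrite prod_natr_shift_eq0 eqxx orbF => /eqP.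
Qed.

End DivSucc.

Lemma charpoly_rec_monic (R : nzRingType) k a : (0 < k)%N -> charpoly_rec R k a \is monic.
Proof.
move=> k_gt0; apply: monicXnsub; rewrite (leq_trans (size_sum _ _ _)) //.
apply/bigmax_leqP_seq => i; rewrite mem_index_iota => /andP [i_gt0 _] _.
by rewrite (leq_trans (size_scale_leq _ _)) // size_polyXn ltn_subrL i_gt0.
Qed.

Lemma charpoly_rec_map (R : nzRingType) k a :
  map_poly intr (charpoly_rec int k a) = charpoly_rec R k a.
Proof.
rewrite rmorphB /= map_polyXn rmorph_sum; congr (_ - _).
by apply: eq_bigr => i _; rewrite /= map_polyZ map_polyXn intz.
Qed.

Lemma charpoly_rec_root0 (R : numDomainType) k a :
  (0 < k)%N -> root (charpoly_rec R k a) 0 = (a k == 0).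
Proof.
move=> k_gt0; rewrite /root hornerD hornerN hornerXn expr0n gtn_eqF // add0r.
rewrite horner_sum big_nat_recr //= big1_seq => [|i /andP [_]]; last first.
  rewrite mem_index_iota => /andP [_ lt_ik].
  by rewrite hornerZ hornerXn expr0n subn_eq0 leqNgt lt_ik mulr0.
by rewrite add0r hornerZ subnn hornerXn mulr1 oppr_eq0 intr_eq0.
Qed.

Lemma monic_int_rec_int (R : nzRingType) (F : {poly int}) (t : nat -> R) :
  F \is monic -> (forall n, shiftp (map_poly intr F) t n = 0) ->
  (forall j, (j < (size F).-1)%N -> exists z : int, t j = z%:~R) ->
  forall n, exists z : int, t n = z%:~R.
Proof.
move=> monF annF t_init n; elim/ltn_ind: n => n IH.
have [/t_init //|le_dn] := ltnP n (size F).-1.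
have size_FR : size (map_poly intr F : {poly R}) = size F.
  by rewrite size_map_poly_id0 // (monicP monF) rmorph1 oner_neq0.
move/eqP: (annF (n - (size F).-1)%N).
rewrite shiftp_monic ?monic_map // size_FR subnK // addrC addr_eq0 => /eqP ->.
suff [z ->] : exists z : int,
    \sum_(j < (size F).-1) (map_poly intr F)`_j * t (n - (size F).-1 + j)%N = z%:~R.
  by exists (- z); rewrite intrN.
apply: (big_ind (fun x : R => exists z : int, x = z%:~R)).
- by exists 0.
- by move=> _ _ [z1 ->] [z2 ->]; exists (z1 + z2); rewrite intrD.
move=> j _; have [|z ->] := IH (n - (size F).-1 + j)%N; first by have := ltn_ord j; lia.
by exists (F`_j * z); rewrite coef_map intrM.
Qed.

Lemma succ_dvdn_fact_mul (R : numFieldType) (F : {poly int}) (u : nat -> int) :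
  F \is monic ->
  (forall n, shiftp (map_poly intr F) (fun m => (u m.+1)%:~R / m.+1%:R : R) n = 0) ->
  forall n, (n.+1 %| ((size F).-1)`! * `|u n.+1|)%N.
Proof.
move=> monF annF; set D := ((size F).-1)`!.
have nz_succ m : m.+1%:R != 0 :> R by rewrite pnatr_eq0.
have t_int : forall n, exists z : int, D%:R * ((u n.+1)%:~R / n.+1%:R) = z%:~R :> R.
  apply: (monic_int_rec_int monF) => [m | j lt_jd].
    by rewrite shiftp_scale annF mulr0.
  have /dvdnP [q Dq] : (j.+1 %| D)%N by rewrite dvdn_fact.
  by exists (q%:Z * u j.+1); rewrite Dq natrM intrM -mulrA [_.+1%:R * _]mulrC divfK.
move=> n; have [z Dz] := t_int n.
have /(congr1 absz) : (D%:Z * u n.+1 = n.+1%:Z * z)%R.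
  by apply: (@intr_inj R); rewrite !intrM /= -Dz mulrCA [_.+1%:~R * _]mulrC divfK.
by move=> /= Du; rewrite !abszM in Du; apply/dvdnP; exists `|z|%N; rewrite Du mulnC.
Qed.

Unset Implicit Arguments.

Theorem lemma2p1 (C : numClosedFieldType) (u : nat -> int) (k : nat)
  (a : nat -> int)
  (hk : (0 < k)%N) (hak : a k != 0)
  (hu0 : exists n, u n != 0)
  (hrec : forall n : nat, (k <= n)%N ->
            u n = \sum_(1 <= i < k.+1) a i * u (n - i)%N)
  (r : nat) (alpha : 'I_r -> C) (halpha_inj : injective alpha)
  (halpha_roots : forall x : C, root (charpoly_rec C k a) x <-> exists i, alpha i = x)
  (g : 'I_r -> {poly C})
  (hg : forall n : nat, ((u n)%:~R : C) = \sum_(i < r) (g i).[n%:R] * alpha i ^+ n) :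
  (is_linrec (fun n : nat => ((u n.+1)%:~R : C) / (n.+1)%:R)
     <-> (forall i : 'I_r, (g i).[0] = 0))
  /\ ((forall i : 'I_r, (g i).[0] = 0) ->
      exists N : nat, forall n : nat, A_set u n -> (n <= N)%N).
Proof.
set f := charpoly_rec C k a; set v := fun n => (u n.+1)%:~R / n.+1%:R.
have alpha_root i : root f (alpha i) by apply/halpha_roots; exists i.
have nz_alpha i : alpha i != 0.
  by apply: contraTneq (alpha_root i) => ->; rewrite charpoly_rec_root0.
have v_exp n : v n = exppoly g alpha n.+1 / n.+1%:R by rewrite /v hg.
have ann_v : (forall i, (g i).[0] = 0) -> exists N, forall n, shiftp (f ^+ N) v n = 0.
  move=> g0; have [N annN] := shiftp_exppoly_div_succ_eq0 alpha_root g0.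
  by exists N => n; rewrite (eq_shiftp _ v_exp).
split; first split.
- by move/(eq_linrec v_exp); apply: exppoly_div_succ_linrec_coef0.
- case/ann_v => N annN; apply/linrecP; exists (f ^+ N) => //.
  exact/monic_exp/charpoly_rec_monic.
case/ann_v => N annN; pose F := charpoly_rec int k a ^+ N.
have monF : F \is monic by exact/monic_exp/charpoly_rec_monic.
have annF n : shiftp (map_poly intr F) v n = 0.
  by rewrite rmorphXn /= charpoly_rec_map annN.
exists ((size F).-1)`! => [[//|n]] [_ coprime_n].
rewrite dvdn_leq ?fact_gt0 // -(@Gauss_dvdl _ _ `|u n.+1|%N) ?/coprime ?coprime_n //.
exact: succ_dvdn_fact_mul monF annF n.
Qed.
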